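(* Let $G$ be a graph on $p$ vertices, $q\ge 2^{p-1}p^2$ an integer and $c=4q+2$. Suppose $\Psi$ is a proper $c$-colouring of $K_c^{G[K_q]}$ with colours $[c]$ such that $\Psi(\phi)\in\mathrm{Im}(\phi)$ for every simple map $\phi$. For $v\in V(G)$ and $b\in[c]$ let $I(v,b)=\{\phi \text{ simple}: \Psi(\phi)=b=\phi(v)\}$, and call $I(v,b)$ large if $|I(v,b)|\ge 2pc^{p-2}$. Then there is a vertex $v\in V(G)$ such that $|\{b\in[c]: I(v,b)\text{ is large}\}|>c/2$.
   Context: $[c]=\{1,\dots,c\}$. $G[K_q]$ has vertex set $V(G)\times[q]$, with $(x,i)\sim(y,j)$ iff $xy\in E(G)$, or $x=y$ and $i\ne j$. $K_c^{F}$ has as vertices all maps $V(F)\to[c]$, with $f\sim g$ iff $f(x)\ne g(y)$ and $f(y)\ne g(x)$ for every edge $xy$ of $F$. $\mathrm{Im}(f)$ is the image of $f$. A map $\phi\in V(K_c^{G[K_q]})$ is simple if $\phi(x,i)=\phi(x,j)$ for all $x\in V(G)$, $i,j\in[q]$; for simple $\phi$ write $\phi(x)$ for this common value. There are exactly $c^p$ simple maps. *)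

From mathcomp Require Import all_boot.
Set Implicit Arguments. Unset Strict Implicit. Unset Printing Implicit Defensive.

Definition simple_graph (V : finType) (e : rel V) : Prop :=
  symmetric e /\ irreflexive e.

(* Adjacency of the lexicographic product G[K_q] on V * 'I_q. *)
Definition lexK (V : finType) (e : rel V) (q : nat) : rel (V * 'I_q) :=
  fun u w => e u.1 w.1 || ((u.1 == w.1) && (u.2 != w.2)).

Arguments lexK [V] e q.

(* Vertices of K_c^F (F with vertex type T): all maps T -> [c] ([c] = 'I_c). *)
Definition expK (T : finType) (F : rel T) (c : nat)
    (f g : {ffun T -> 'I_c}) : bool :=
  [forall x, forall y, F x y ==> (f x != g y) && (f y != g x)].

Definition proper_exp_colouring (T : finType) (F : rel T) (c : nat)
    (Psi : {ffun T -> 'I_c} -> 'I_c) : Prop :=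
  forall f g, f != g -> expK F f g -> Psi f != Psi g.

Definition simple_map (V : finType) (q c : nat) (phi : {ffun V * 'I_q -> 'I_c}) : bool :=
  [forall x, forall i, forall j, phi (x, i) == phi (x, j)].

Definition Iset (V : finType) (q c : nat) (Psi : {ffun V * 'I_q -> 'I_c} -> 'I_c)
    (v : V) (b : 'I_c) : {set {ffun V * 'I_q -> 'I_c}} :=
  [set phi | simple_map phi && (Psi phi == b) && [forall i, phi (v, i) == b]].

(* I(v,b) large: |I(v,b)| >= 2 p c^(p-2), stated without truncated subtraction
   as |I(v,b)| * c^2 >= 2 p c^p. *)
Definition large (V : finType) (q c : nat) (Psi : {ffun V * 'I_q -> 'I_c} -> 'I_c)
    (v : V) (b : 'I_c) : bool :=
  2 * #|V| * c ^ #|V| <= #|Iset Psi v b| * c ^ 2.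

From mathcomp Require Import all_boot.
From mathcomp Require Import zify ring.

Set Implicit Arguments.
Unset Strict Implicit.
Unset Printing Implicit Defensive.

(* Suppose every vertex had at most c/2 large colours.  The simple maps whose
   value at each vertex v is a non-large colour of v number at least
   (c/2)^p.  Such a map phi has Psi phi = phi u for some vertex u, so it lies
   in I(u, phi u) with phi u non-large at u; hence all of them are covered by
   at most p c non-large sets, each of size below 2 p c^(p-2).  This gives
   (c/2)^p <= 2 p^2 c^(p-1), i.e. c <= 2^(p+1) p^2 <= 4 q, contradicting
   c = 4 q + 2. *)

Lemma leq_card_bigcup (I T : finType) (P : {pred I}) (F : I -> {set T}) :
  #|\bigcup_(i in P) F i| <= \sum_(i in P) #|F i|.
Proof.
apply: (big_rec2 (fun (X : {set T}) n => #|X| <= n)); first by rewrite cards0.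
move=> i X n _ leXn; rewrite cardsU.
exact: leq_trans (leq_subr _ _) (leq_add _ leXn).
Qed.

Lemma leq_exp_prod_half (I : finType) (a : nat) (F : I -> nat) :
  (forall i, a <= 2 * F i) -> a ^ #|I| <= 2 ^ #|I| * \prod_i F i.
Proof.
move=> leaF; rewrite -!prod_nat_const -big_split /=.
by apply: leq_prod => i _; apply: leaF.
Qed.

Section SimpleLift.

Variables (V : finType) (q c : nat).

Definition lift_map (f : {ffun V -> 'I_c}) : {ffun V * 'I_q -> 'I_c} :=
  [ffun u => f u.1].

Lemma lift_map_simple f : simple_map (lift_map f).
Proof. by apply/forallP => x; apply/forallP => i; apply/forallP => j; rewrite !ffunE. Qed.

Lemma lift_map_inj : 0 < q -> injective lift_map.
Proof.
move=> q_gt0 f g /ffunP eq_fg; apply/ffunP => v.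
by have := eq_fg (v, Ordinal q_gt0); rewrite !ffunE.
Qed.

Variables (Psi : {ffun V * 'I_q -> 'I_c} -> 'I_c).
Hypothesis Psi_in_codom : forall phi, simple_map phi -> Psi phi \in codom phi.

Lemma lift_map_in_Iset f : exists u, lift_map f \in Iset Psi u (f u).
Proof.
have /codomP [[u i] Psi_f] := Psi_in_codom (lift_map_simple f).
exists u; rewrite inE lift_map_simple Psi_f ffunE eqxx /=.
by apply/forallP => j; rewrite ffunE.
Qed.

Lemma prod_card_le_sum_Iset (S : V -> {set 'I_c}) : 0 < q ->
  \prod_v #|S v| <= \sum_(x : V * 'I_c | x.2 \in S x.1) #|Iset Psi x.1 x.2|.
Proof.
move=> q_gt0; apply: leq_trans (leq_card_bigcup _ _).
have -> : \prod_v #|S v| = #|lift_map @: family (fun v => mem (S v))|.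
  by rewrite card_imset ?card_family ?foldrE ?big_map ?big_enum //; apply: lift_map_inj.
apply/subset_leq_card/subsetP => _ /imsetP [f /familyP Sf ->].
have [u f_in_I] := lift_map_in_Iset f.
by apply/bigcupP; exists (u, f u) => //=; apply: Sf.
Qed.

End SimpleLift.

Lemma leq_count_bound (p c M : nat) : 0 < c ->
  c ^ p <= 2 ^ p * M -> M * c ^ 2 <= p * c * (2 * p * c ^ p) ->
  c <= 2 ^ p.+1 * p ^ 2.
Proof.
move=> c_gt0 le_cM le_M.
have cp_gt0 : 0 < c ^ p by rewrite expn_gt0 c_gt0.
rewrite -(leq_pmul2l cp_gt0) -(leq_pmul2r c_gt0).
apply: leq_trans (_ : 2 ^ p * (M * c ^ 2) <= _); last first.
  apply: leq_trans (leq_mul (leqnn _) le_M) _.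
  by rewrite [2 ^ p.+1]expnS; apply: eq_leq; ring.
by rewrite -mulnA mulnn mulnA leq_mul2r le_cM orbT.
Qed.

Lemma leq_exp2S_pred (p : nat) : 2 ^ p.+1 * p ^ 2 <= 4 * (2 ^ p.-1 * p ^ 2).
Proof. by case: p => [|p] //=; rewrite !expnS; lia. Qed.

Theorem lemma3 (V : finType) (e : rel V) (p q c : nat)
  (hG : simple_graph e) (hp : #|V| = p)
  (hq : 2 ^ p.-1 * p ^ 2 <= q) (hc : c = 4 * q + 2)
  (Psi : {ffun V * 'I_q -> 'I_c} -> 'I_c)
  (hPsi : proper_exp_colouring (lexK e q) Psi)
  (hIm : forall phi, simple_map phi -> Psi phi \in codom phi) :
  exists v : V, c < 2 * #|[set b : 'I_c | large Psi v b]|.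
Proof.
apply/existsP; apply: contraT; rewrite negb_exists => /forallP few_large.
pose small v := ~: [set b : 'I_c | large Psi v b].
have half_small v : c <= 2 * #|small v|.
  have : ~~ (c < 2 * #|[set b : 'I_c | large Psi v b]|) by apply: few_large.
  by have := cardsC [set b : 'I_c | large Psi v b]; rewrite card_ord -ltnNge /small; lia.
have c_gt0 : 0 < c by rewrite hc addn2.
have q_gt0 : 0 < q.
  have /codomP [[_ i] _] := hIm _ (lift_map_simple q [ffun=> Ordinal c_gt0]).
  exact: leq_ltn_trans (leq0n i) (ltn_ord i).
have small_Iset x : x.2 \in small x.1 -> #|Iset Psi x.1 x.2| * c ^ 2 <= 2 * p * c ^ p.
  by rewrite inE inE /large hp -ltnNge => /ltnW.
have c_le : c <= 2 ^ p.+1 * p ^ 2.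
  pose M := \sum_(x : V * 'I_c | x.2 \in small x.1) #|Iset Psi x.1 x.2|.
  apply: (@leq_count_bound p c M) => //.
    rewrite -hp; apply: leq_trans (leq_exp_prod_half half_small) _.
    by rewrite leq_mul2l (prod_card_le_sum_Iset hIm small q_gt0) orbT.
  rewrite big_distrl /=; apply: leq_trans (leq_sum _ small_Iset) _.
  rewrite sum_nat_const leq_mul2r; apply/orP; right.
  by apply: leq_trans (max_card _) _; rewrite card_prod card_ord hp.
by have := leq_exp2S_pred p; lia.
Qed.
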